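(* Let $(Y,U)$ be discrete random variables with $Y$ taking values in a finite set $\mathcal{Y}$, let $\mu\in(0,\frac12)$ and $\epsilon>0$. If $$\Pr\left(|h(Y|U)-c|>\epsilon\right)<\mu$$ for some $c>0$, then $$\Pr\left(|h(Y|U)-\mathbb{H}(Y|U)|>2\epsilon+\mu\log_2\frac{|\mathcal{Y}|}{\mu^2}\right)<\mu.$$
   Context: $h(Y|U)$ denotes the random variable $-\log_2 p_{Y|U}(Y|U)$; $\mathbb{H}(Y|U)$ is the conditional entropy. *)

From HB Require Import structures.
From mathcomp Require Import all_boot all_order all_algebra.
From mathcomp Require Import all_classical all_reals all_analysis.
Set Implicit Arguments. Unset Strict Implicit. Unset Printing Implicit Defensive.
Import Order.TTheory GRing.Theory Num.Theory.
Local Open Scope classical_set_scope.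
Local Open Scope ring_scope.

(* A pair of discrete random variables (Y,U) is described by its joint pmf
   p y u = Pr(Y = y, U = u), Y ranging over a finite type, U over a countable
   type. *)
Section InfoDefs.
Variables (R : realType) (Y : finType) (U : countType).
Implicit Type p : Y -> U -> R.

Definition is_joint_pmf p : Prop :=
  (forall y u, 0 <= p y u) /\
  (\esum_(x in [set: Y * U]) (p x.1 x.2)%:E = 1)%E.

Definition log2 (x : R) : R := ln x / ln 2.

Definition pU p (u : U) : R := \sum_(y : Y) p y u.

Definition pYgU p (y : Y) (u : U) : R := p y u / pU p u.

Definition hYU p (y : Y) (u : U) : R := - log2 (pYgU p y u).

Definition Prob p (A : Y -> U -> Prop) : \bar R :=
  \esum_(x in [set x : Y * U | A x.1 x.2]) (p x.1 x.2)%:E.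

(* conditional entropy H(Y|U) = E[h(Y|U)] (a finite nonnegative sum,
   bounded by log2 |Y|) *)
Definition condEnt p : R :=
  fine (\esum_(x in [set: Y * U]) (p x.1 x.2 * hYU p x.1 x.2)%:E).

End InfoDefs.

From HB Require Import structures.
From mathcomp Require Import all_boot all_order all_algebra.
From mathcomp Require Import all_classical all_reals all_analysis.
From mathcomp Require Import ring lra.
Import Order.TTheory GRing.Theory Num.Theory.
Local Open Scope ring_scope.

(* Let A be the event |h(Y|U) - c| > eps, so Pr(A) < mu. Off A, h(Y|U) is
   within eps of c, and this part contributes (c +- eps) Pr(not A) to
   H(Y|U) = E[h(Y|U)]. On A, Gibbs' inequality
   -p ln(p/P) <= P/Z + (ln Z - 1) p, summed with P the U-marginal (whose total
   mass over Y x U is |Y|) and Z = |Y|/mu^2, bounds the contribution by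
   mu log2 Z. For the lower bound, c - eps < log2 Z: otherwise every outcome
   off A would have conditional probability at most 1/Z, giving
   Pr(not A) <= mu^2 < 1 - mu. Hence |H(Y|U) - c| <= eps + mu log2 Z, and by
   the triangle inequality the event of the conclusion is contained in A. *)

Section ln_log2.
Context {R : realType}.

Lemma ln_le_subr1 (z : R) : 0 < z -> ln z <= z - 1.
Proof.
move=> z0; have := @le_ln1Dx R (z - 1).
by rewrite addrCA subrr addr0; apply; lra.
Qed.

Lemma ln2_gt0 : 0 < ln (2 : R).
Proof. by apply: ln_gt0; rewrite ltr1n. Qed.

Lemma ln_ge1 (x : R) : 4 <= x -> 1 <= ln x.
Proof.
move=> x4; have ln2_ge : 1 / 2 <= ln (2 : R).
  have := @ln_le_subr1 2^-1; rewrite lnV ?posrE ?invr_gt0 //; lra.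
have ln4 : ln (4 : R) = ln 2 + ln 2 by rewrite -lnM ?posrE //; congr ln; lra.
by apply: le_trans (_ : ln 4 <= ln x); [lra | rewrite ler_ln ?posrE //; lra].
Qed.

Lemma log2_div_ge0 (a b : R) : 0 <= a <= b -> 0 <= - log2 (a / b).
Proof.
move=> /andP[a0 ab]; rewrite oppr_ge0 pmulr_lle0 ?invr_gt0 ?ln2_gt0 //.
apply: ln_le0; have [->|b0] := eqVneq b 0; first by rewrite invr0 mulr0.
by rewrite ler_pdivrMr ?mul1r // lt_neqAle eq_sym b0 (le_trans a0 ab).
Qed.

(* Gibbs' inequality: ln z <= z - 1 at z = b / (Z a). *)
Lemma mul_log2_div_le {a b Z : R} : 0 <= a <= b -> 0 < Z ->
  a * - log2 (a / b) <= (b / Z + (ln Z - 1) * a) / ln 2.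
Proof.
move=> /andP[a0 ab] Z0; have l2 := ln2_gt0.
have [->|a_neq0] := eqVneq a 0.
  by rewrite mul0r mulr0 addr0 !divr_ge0 ?(le_trans a0 ab) // ltW.
have a_gt0 : 0 < a by rewrite lt_neqAle eq_sym a_neq0.
have b_gt0 : 0 < b by apply: lt_le_trans ab.
rewrite /log2 mulrN mulrA -mulNr ler_pM2r ?invr_gt0 //.
have := @ln_le_subr1 (b / (Z * a)); rewrite divr_gt0 ?mulr_gt0 //.
rewrite ln_div ?posrE ?mulr_gt0 // lnM ?posrE // ln_div ?posrE // => /(_ isT).
have -> : b / (Z * a) = (b / Z) / a by field; rewrite !gt_eqF.
move=> /(ler_wpM2l (ltW a_gt0)); rewrite [X in _ <= X]mulrBr mulrCA divff //.
lra.
Qed.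

Lemma le_div_of_log2_le {a b Z : R} : 0 <= a <= b -> 0 < Z ->
  log2 Z <= - log2 (a / b) -> a <= b / Z.
Proof.
move=> /andP[a0 ab] Z0; have l2 := ln2_gt0.
have [->|a_neq0] := eqVneq a 0.
  by rewrite divr_ge0 // ?(le_trans a0 ab) // ltW.
have a_gt0 : 0 < a by rewrite lt_neqAle eq_sym a_neq0.
have b_gt0 : 0 < b by apply: lt_le_trans ab.
rewrite /log2 -mulNr ler_pM2r ?invr_gt0 // -lnV ?posrE ?divr_gt0 //.
rewrite ler_ln ?posrE ?invr_gt0 ?divr_gt0 // invf_div ler_pdivlMr //.
by rewrite mulrC -ler_pdivlMr.
Qed.

End ln_log2.

Section esum_lemmas.
Context {R : realType} {T : choiceType}.
Local Open Scope ereal_scope.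

Lemma esumZl (S : set T) (k : R) (a : T -> \bar R) :
  (0 <= k)%R -> (forall x, 0 <= a x) ->
  \esum_(x in S) (k%:E * a x) = k%:E * \esum_(x in S) a x.
Proof.
move=> k0 a0; rewrite /esum -ereal_supZl //; last first.
  apply/set0P; exists (\sum_(x \in set0) a x); exists set0 => //.
  exact: fsets_set0.
rewrite image_comp; congr ereal_sup; apply: eq_imagel => X _ /=.
by rewrite ge0_mule_fsumr.
Qed.

Lemma le_esum_subset (A B : set T) (a : T -> \bar R) :
  (B `<=` A)%classic -> (forall x, A x -> 0 <= a x) ->
  \esum_(x in B) a x <= \esum_(x in A) a x.
Proof.
move=> BA a0; rewrite (esumID B A) // setIidr //; apply: leeDl.
by apply: esum_ge0 => x [/a0].
Qed.

Lemma esum_finTE {F : finType} (a : F -> \bar R) : (forall x, 0 <= a x) ->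
  \esum_(x in [set: F]) a x = \sum_(x : F) a x.
Proof.
move=> a0; rewrite esum_fset //; last exact: finite_finset.
rewrite (fsbigE (enum F)) ?enum_uniq //; last by move=> x; rewrite mem_enum.
by rewrite big_enum_cond /=; apply: eq_bigl => x; rewrite in_setT.
Qed.

Lemma esum_finXE {F : finType} {V : choiceType} (g : F -> V -> \bar R) :
  (forall y u, 0 <= g y u) ->
  \esum_(x in [set: F * V]) g x.1 x.2 =
  \sum_(y : F) \esum_(u in [set: V]) g y u.
Proof.
move=> g0; rewrite -esum_finTE => [|y]; last exact: esum_ge0.
by rewrite esum_esum //; congr esum; apply/seteqP; split.
Qed.

Lemma fineK_le (x : \bar R) (r : R) : 0 <= x -> x <= r%:E -> (fine x)%:E = x.
Proof.
by move=> x0 xr; rewrite fineK // ge0_fin_numE // (le_lt_trans xr) ?ltry.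
Qed.

End esum_lemmas.

Section joint_pmf.
Context {R : realType} {Y : finType} {U : countType}.
Variable p : Y -> U -> R.
Hypothesis pmf : is_joint_pmf p.
Local Open Scope classical_set_scope.
Local Notation h := (hYU p).

Definition pr (S : set (Y * U)) : R := fine (\esum_(x in S) (p x.1 x.2)%:E)%E.

Definition partial_ent (S : set (Y * U)) : R :=
  fine (\esum_(x in S) (p x.1 x.2 * h x.1 x.2)%:E)%E.

Lemma p_ge0 y u : 0 <= p y u.
Proof. by case: pmf. Qed.

Lemma pU_ge0 u : 0 <= pU p u.
Proof. exact/sumr_ge0/(fun y _ => p_ge0 y u). Qed.

Lemma p_le_pU y u : 0 <= p y u <= pU p u.
Proof.
by rewrite p_ge0 /pU (bigD1 y) //= lerDl sumr_ge0 // => *; apply: p_ge0.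
Qed.

Lemma hYU_ge0 y u : 0 <= h y u.
Proof. exact/log2_div_ge0/p_le_pU. Qed.

Lemma esum_prE S : (\esum_(x in S) (p x.1 x.2)%:E)%E = (pr S)%:E.
Proof.
have p0 x : (0 <= (p x.1 x.2)%:E)%E by rewrite lee_fin p_ge0.
apply/esym/(@fineK_le _ _ 1); first exact: esum_ge0.
by case: pmf => _ <-; apply: le_esum_subset.
Qed.

Lemma pr_ge0 S : 0 <= pr S.
Proof.
by rewrite -lee_fin -esum_prE; apply: esum_ge0 => x _; rewrite lee_fin p_ge0.
Qed.

Lemma prC S : pr (~` S) = 1 - pr S.
Proof.
have p0 x : [set: Y * U] x -> (0 <= (p x.1 x.2)%:E)%E by rewrite lee_fin p_ge0.
apply/eqP; rewrite eq_sym subr_eq addrC -(@eqe R) EFinD -!esum_prE.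
by case: pmf => _ <-; rewrite (esumID S) // !setTI.
Qed.

Lemma esum_pU_le (S : set (Y * U)) :
  (\esum_(x in S) (pU p x.2)%:E <= (#|Y|%:R)%:E)%E.
Proof.
have pU0 u : (0 <= (pU p u)%:E)%E by rewrite lee_fin pU_ge0.
have p0 y u : (0 <= (p y u)%:E)%E by rewrite lee_fin p_ge0.
have massU : (\esum_(u in [set: U]) (pU p u)%:E = 1)%E.
  case: pmf => _ <-.
  rewrite (esum_finXE (fun y u => (p y u)%:E)) // -esum_sum //.
  by apply: eq_esum => u _; rewrite sumEFin.
apply: (@le_trans _ _ (\esum_(x in [set: Y * U]) (pU p x.2)%:E)%E).
  exact: le_esum_subset.
rewrite (esum_finXE (fun _ u => (pU p u)%:E)) //.
by under eq_bigr do rewrite massU; rewrite sumEFin sumr_const.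
Qed.

Lemma card_gt0 : (0 < #|Y|)%N.
Proof.
case: (pickP (@predT Y)) => [y _ | Y0]; first by apply/card_gt0P; exists y.
have := proj2 pmf; rewrite esum1 => [/eqP|[y u] _]; last by move: (Y0 y).
by rewrite eq_sym onee_eq0.
Qed.

Lemma esum_ent_le (S : set (Y * U)) Z : 1 <= ln Z ->
  (\esum_(x in S) (p x.1 x.2 * h x.1 x.2)%:E <=
   ((#|Y|%:R / Z + (ln Z - 1) * pr S) / ln 2)%:E)%E.
Proof.
move=> lnZ1; have l2 := @ln2_gt0 R.
have Z0 : 0 < Z by rewrite ltNge; apply: contraTN lnZ1 => /ln0 ->; lra.
have k1_ge0 : 0 <= (Z * ln 2)^-1 by rewrite invr_ge0 mulr_ge0 // ltW.
have k2_ge0 : 0 <= (ln Z - 1) / ln 2 by rewrite divr_ge0 ?subr_ge0 // ltW.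
apply: (@le_trans _ _ (\esum_(x in S) ((Z * ln 2)^-1%:E * (pU p x.2)%:E
                       + ((ln Z - 1) / ln 2)%:E * (p x.1 x.2)%:E))%E).
  apply: le_esum => -[y u] _; rewrite -!EFinM -EFinD lee_fin /=.
  apply: le_trans (mul_log2_div_le (p_le_pU y u) Z0) _.
  by rewrite le_eqVlt; apply/predU1P; left; field; rewrite !gt_eqF.
rewrite esumD => [|x _|x _]; last 2 first.
- by rewrite -EFinM lee_fin mulr_ge0 ?pU_ge0.
- by rewrite -EFinM lee_fin mulr_ge0 ?p_ge0.
rewrite !esumZl // => [|x|x]; rewrite ?lee_fin ?pU_ge0 ?p_ge0 //.
have -> : (#|Y|%:R / Z + (ln Z - 1) * pr S) / ln 2 =
    (Z * ln 2)^-1 * #|Y|%:R + (ln Z - 1) / ln 2 * pr S.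
  by field; rewrite !gt_eqF.
by rewrite esum_prE EFinD !EFinM leeD // lee_wpmul2l ?lee_fin // esum_pU_le.
Qed.

Lemma esum_entE (S : set (Y * U)) :
  (\esum_(x in S) (p x.1 x.2 * h x.1 x.2)%:E)%E = (partial_ent S)%:E.
Proof.
have lne1 : 1 <= ln (expR 1 : R) by rewrite expRK.
apply/esym/fineK_le/esum_ent_le/lne1.
by apply: esum_ge0 => x _; rewrite lee_fin mulr_ge0 ?p_ge0 ?hYU_ge0.
Qed.

Lemma condEnt_split (S : set (Y * U)) :
  condEnt p = partial_ent S + partial_ent (~` S).
Proof.
have ph0 x : [set: Y * U] x -> (0 <= (p x.1 x.2 * h x.1 x.2)%:E)%E.
  by rewrite lee_fin mulr_ge0 ?p_ge0 ?hYU_ge0.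
rewrite -[condEnt p]/(partial_ent [set: Y * U]).
by apply: EFin_inj; rewrite EFinD -!esum_entE (esumID S) // !setTI.
Qed.

Lemma partial_ent_le_Gibbs (S : set (Y * U)) {Z : R} : 1 <= ln Z ->
  partial_ent S <= (#|Y|%:R / Z + (ln Z - 1) * pr S) / ln 2.
Proof. by move=> lnZ1; rewrite -lee_fin -esum_entE; apply: esum_ent_le. Qed.

Lemma partial_ent_le (S : set (Y * U)) {b : R} : 0 <= b ->
  (forall x, S x -> h x.1 x.2 <= b) -> partial_ent S <= b * pr S.
Proof.
move=> b0 hb; rewrite -lee_fin -esum_entE EFinM -esum_prE.
rewrite -esumZl // => [|x]; last by rewrite lee_fin p_ge0.
apply: le_esum => x Sx; rewrite -EFinM lee_fin mulrC.
by rewrite ler_wpM2r ?p_ge0 ?hb.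
Qed.

Lemma partial_ent_ge (S : set (Y * U)) {a : R} : 0 <= a ->
  (forall x, S x -> a <= h x.1 x.2) -> a * pr S <= partial_ent S.
Proof.
move=> a0 ha; rewrite -lee_fin -esum_entE EFinM -esum_prE.
rewrite -esumZl // => [|x]; last by rewrite lee_fin p_ge0.
apply: le_esum => x Sx; rewrite -EFinM lee_fin mulrC.
by rewrite ler_wpM2l ?p_ge0 ?ha.
Qed.

Lemma pr_le_of_hYU_ge (S : set (Y * U)) {Z : R} : 0 < Z ->
  (forall x, S x -> log2 Z <= h x.1 x.2) -> pr S <= #|Y|%:R / Z.
Proof.
move=> Z0 hZ; rewrite -lee_fin -esum_prE.
apply: (@le_trans _ _ (\esum_(x in S) (Z^-1%:E * (pU p x.2)%:E))%E).
  apply: le_esum => -[y u] /hZ /(le_div_of_log2_le (p_le_pU y u) Z0).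
  by rewrite lee_fin mulrC.
rewrite esumZl ?invr_ge0 ?(ltW Z0) // => [|x]; last by rewrite lee_fin pU_ge0.
by rewrite mulrC EFinM lee_wpmul2l ?lee_fin ?invr_ge0 ?(ltW Z0) // esum_pU_le.
Qed.

Section concentration.
Variables (mu eps c : R) (A : set (Y * U)).
Hypotheses (mu_gt0 : 0 < mu) (mu_lt_half : mu < 1 / 2).
Hypotheses (eps_ge0 : 0 <= eps) (c_ge0 : 0 <= c).
Hypothesis prA_lt : pr A < mu.
Hypothesis h_near_c : forall x, ~ A x -> `|h x.1 x.2 - c| <= eps.
Let Z := #|Y|%:R / mu ^+ 2.

Let Z_gt0 : 0 < Z.
Proof. by rewrite divr_gt0 ?exprn_gt0 // ltr0n card_gt0. Qed.

Let card_divZ : #|Y|%:R / Z = mu ^+ 2.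
Proof.
have : #|Y|%:R != 0 :> R by rewrite pnatr_eq0 -lt0n card_gt0.
by move=> Y0; rewrite /Z invf_div mulrCA divff ?mulr1.
Qed.

Let lnZ_ge1 : 1 <= ln Z.
Proof.
apply: ln_ge1; rewrite /Z ler_pdivlMr ?exprn_gt0 //.
have : 1 <= #|Y|%:R :> R by rewrite ler1n card_gt0.
have := mu_gt0; have := mu_lt_half; nra.
Qed.

Lemma condEnt_ub : condEnt p <= c + eps + mu * log2 Z.
Proof.
have l2 := @ln2_gt0 R; have prA0 := pr_ge0 A.
have entA := partial_ent_le_Gibbs A lnZ_ge1; rewrite card_divZ in entA.
have entC : partial_ent (~` A) <= (c + eps) * (1 - pr A).
  rewrite -prC; apply: partial_ent_le => [|x /h_near_c /ler_distlDr //].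
  exact: addr_ge0.
have : (mu ^+ 2 + (ln Z - 1) * pr A) / ln 2 <= mu * log2 Z.
  rewrite /log2 mulrA ler_pM2r ?invr_gt0 //.
  have : (ln Z - 1) * pr A <= (ln Z - 1) * mu.
    by apply: ler_wpM2l; [rewrite subr_ge0 | exact: ltW].
  have := mu_gt0; have := mu_lt_half; nra.
have := mulr_ge0 (addr_ge0 c_ge0 eps_ge0) prA0.
rewrite (condEnt_split A); lra.
Qed.

Lemma condEnt_lb : c - eps - mu * log2 Z <= condEnt p.
Proof.
have log2Z_ge0 : 0 <= log2 Z.
  by apply: divr_ge0; [apply: le_trans lnZ_ge1 | exact/ltW/ln2_gt0].
have [ce_le0|ce_gt0] := lerP (c - eps) 0.
  have : 0 <= condEnt p.
    by apply/fine_ge0/esum_ge0 => x _; rewrite lee_fin mulr_ge0 ?p_ge0 ?hYU_ge0.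
  have := mu_gt0; nra.
have h_ge x : ~ A x -> c - eps <= h x.1 x.2 by move=> /h_near_c /ler_distlCBl.
have ce_lt : c - eps < log2 Z.
  rewrite ltNge; apply/negP => /(le_trans) hZ.
  have := pr_le_of_hYU_ge (~` A) Z_gt0 (fun x nAx => hZ _ (h_ge x nAx)).
  rewrite prC card_divZ; have := prA_lt; have := mu_gt0; have := mu_lt_half.
  nra.
have entA := partial_ent_ge A (lexx 0) (fun x _ => hYU_ge0 x.1 x.2).
have entC := partial_ent_ge (~` A) (ltW ce_gt0) h_ge.
rewrite prC in entC.
have := prA_lt; have := mu_gt0; rewrite (condEnt_split A); nra.
Qed.

Lemma condEnt_near : `|condEnt p - c| <= eps + mu * log2 Z.
Proof. by rewrite ler_distl; have := condEnt_lb; have := condEnt_ub; lra. Qed.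

End concentration.

End joint_pmf.

Theorem corollary9 (R : realType) (Y : finType) (U : countType)
  (p : Y -> U -> R) (mu eps c : R) :
  is_joint_pmf p ->
  0 < mu -> mu < 1 / 2 -> 0 < eps -> 0 < c ->
  (Prob p (fun y u => (`|hYU p y u - c| > eps)%R) < mu%:E)%E ->
  (Prob p (fun y u =>
      (`|hYU p y u - condEnt p| > 2 * eps + mu * log2 (#|Y|%:R / mu ^+ 2))%R)
   < mu%:E)%E.
Proof.
move=> pmf mu_gt0 mu_lt_half eps_gt0 c_gt0 prA_lt.
set A := [set x : Y * U | eps < `|hYU p x.1 x.2 - c|]%classic.
have h_near_c x : ~ A x -> `|hYU p x.1 x.2 - c| <= eps.
  by move/negP; rewrite -leNgt.
rewrite /Prob !(esum_prE p pmf) lte_fin in prA_lt *.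
have H_near := condEnt_near p pmf mu eps c A mu_gt0 mu_lt_half
  (ltW eps_gt0) (ltW c_gt0) prA_lt h_near_c.
apply: le_lt_trans prA_lt; rewrite -lee_fin -!(esum_prE p pmf).
apply: le_esum_subset => [x /= far_H|x _]; last by rewrite lee_fin p_ge0.
apply: contrapT => /h_near_c h_near; move: far_H; apply/negP; rewrite -leNgt.
rewrite (le_trans (ler_distD c _ _)) // !(distrC c); lra.
Qed.
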